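(* Let $\mathbf{A}$ be an $n\times n$ skew-symmetric matrix over a field $K$ and $\mathbf{v}\in K^n$. Let \[\mathbf{A}_{\mathbf{v}}=\begin{pmatrix}\mathbf{A}&\mathbf{v}\\-\mathbf{v}^T&0\end{pmatrix},\] an $(n+1)\times(n+1)$ matrix. Then for every $I\subseteq[n]$, \[\det\bigl((\mathbf{A}+\mathbf{v}\mathbf{v}^T)[I]\bigr)=\det\bigl(\mathbf{A}_{\mathbf{v}}[\alpha(I)]\bigr),\] where $\alpha(I)=I$ if $|I|$ is even and $\alpha(I)=I\cup\{n+1\}$ if $|I|$ is odd.
   Context: A matrix is skew-symmetric if $\mathbf{A}_{ij}=-\mathbf{A}_{ji}$ for all $i,j$ and $\mathbf{A}_{ii}=0$ for all $i$. $\mathbf{M}[X]$ denotes the principal submatrix indexed by $X$, with $\det(\mathbf{M}[\emptyset])=1$. *)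

From mathcomp Require Import all_boot all_order all_algebra.
Set Implicit Arguments. Unset Strict Implicit. Unset Printing Implicit Defensive.
Import GRing.Theory.
Local Open Scope ring_scope.

Definition skew_symmetric (K : fieldType) (n : nat) (A : 'M[K]_n) : Prop :=
  (forall i j, A i j = - A j i) /\ (forall i, A i i = 0).

(* principal submatrix M[X], rows/columns in increasing order of X *)
Definition principal_submx (K : fieldType) (n : nat) (M : 'M[K]_n) (X : {set 'I_n})
  : 'M[K]_#|X| :=
  \matrix_(i < #|X|, j < #|X|) M (enum_val i) (enum_val j).

Definition bordered_mx (K : fieldType) (n : nat) (A : 'M[K]_n) (v : 'cV[K]_n)
  : 'M[K]_(n + 1) :=
  block_mx A v (- v^T) 0.

Definition alpha_set (n : nat) (I : {set 'I_n}) : {set 'I_(n + 1)} :=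
  if odd #|I| then (lshift 1 @: I) :|: [set rshift n (ord0 : 'I_1)]
  else lshift 1 @: I.

From mathcomp Require Import all_boot all_order all_algebra all_fingroup.
Set Implicit Arguments. Unset Strict Implicit. Unset Printing Implicit Defensive.
Import GRing.Theory.
Local Open Scope ring_scope.

(* Bordering and a Schur complement give, for every square B and column w,
   det (B + w w^T) = det [[B, w], [-w^T, 0]] + det B.
   For B = A[I] the bordered matrix is exactly A_v[I + {n+1}], so it remains to
   see that one of the two terms vanishes: a skew-symmetric matrix with zero
   diagonal of odd order has determinant 0, in every characteristic.  Indeed
   s |-> s^-1 reverses the sign of the Leibniz terms, and a self-inverse
   permutation of an odd set has a fixed point i, whose factor M i i = 0 kills
   its term.  If |I| is odd then det B = 0; if |I| is even, the bordered matrix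
   has odd order. *)

Section SignReversingInvolution.

Variables (V : zmodType) (T : finType) (f : T -> T) (F : T -> V).
Hypotheses (fK : involutive f) (F_f : forall x, F (f x) = - F x)
  (F_fixed : forall x, f x = x -> F x = 0).

Lemma sum_sign_reversing_involution : \sum_x F x = 0.
Proof.
(* Pair x with f x, keeping the member of smaller enum_rank. *)
pose r (x : T) := nat_of_ord (enum_rank x).
rewrite (bigID (fun x => r x < r (f x))%N) /=.
rewrite [X in _ + X](bigID (fun x => r (f x) < r x)%N) /=.
rewrite [X in _ + (_ + X)]big1 ?addr0; last first.
  move=> x /andP[]; rewrite -!leqNgt => le1 le2; apply: F_fixed.
  by apply/enum_rank_inj/val_inj/eqP; rewrite eqn_leq le1 le2.
rewrite [X in _ + X](reindex_inj (can_inj fK)) /=.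
rewrite [X in _ + X](eq_bigl (fun x => r x < r (f x))%N); last first.
  by move=> x; rewrite fK; case: ltngtP.
by under [X in _ + X]eq_bigr => x _ do rewrite F_f; rewrite sumrN subrr.
Qed.

End SignReversingInvolution.

Lemma involution_odd_card_fixed (T : finType) (f : T -> T) :
  involutive f -> odd #|T| -> exists x, f x = x.
Proof.
move=> fK odd_T.
case: (pickP (fun x => f x == x)) => [x /eqP|no_fixed]; first by exists x.
(* Count modulo 2: in 'Z_2 the constant 1 is sign-reversed by any map. *)
have : \sum_(x : T) (1 : 'Z_2) = 0.
  apply: (sum_sign_reversing_involution fK) => [x | x /eqP]; last by rewrite no_fixed.
  by apply: val_inj.
by rewrite sumr_const => /(congr1 val); rewrite Zp_nat /= modn2 [odd _]odd_T.
Qed.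

Lemma det_skew_odd (R : comPzRingType) m (M : 'M[R]_m) :
  (forall i j, M i j = - M j i) -> (forall i, M i i = 0) -> odd m -> \det M = 0.
Proof.
move=> M_skew M_diag odd_m.
apply: (sum_sign_reversing_involution (@invgK _)) => [s | s sV].
  rewrite odd_permV (reindex_inj (@perm_inj _ s)) /=.
  under eq_bigr => i _ do rewrite permK M_skew.
  by rewrite prodrN card_ord -[(-1) ^+ m]signr_odd odd_m mulN1r mulrN.
have s_inv : involutive s by move=> i; rewrite -{1}sV permK.
have [|i si] := involution_odd_card_fixed s_inv; first by rewrite card_ord.
by rewrite (bigD1 i) //= si M_diag mul0r mulr0.
Qed.

Section BorderedDeterminant.

Variables (R : comPzRingType) (m : nat).

Lemma det_col_mxD (T : 'M[R]_(m, m + 1)) (r1 r2 : 'rV_(m + 1)) :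
  \det (col_mx T (r1 + r2)) = \det (col_mx T r1) + \det (col_mx T r2).
Proof.
pose i0 := rshift m (ord0 : 'I_1).
have row_i0 r : row i0 (col_mx T r) = r by apply/rowP => j; rewrite mxE col_mxEd.
have row'_i0 r r' : row' i0 (col_mx T r) = row' i0 (col_mx T r').
  apply/matrixP => i j; rewrite !mxE; case: split_ordP => // k /eqP.
  by rewrite (ord1 k) eq_sym (negbTE (neq_lift _ _)).
rewrite (@determinant_multilinear _ _ _ (col_mx T r1) (col_mx T r2) i0 1 1).
- by rewrite !mul1r.
- by rewrite !row_i0 !scale1r.
- exact: row'_i0.
- exact: row'_i0.
Qed.

Lemma det_add_mul_block (B : 'M[R]_m) (w : 'cV_m) (u : 'rV_m) :
  \det (B + w *m u) = \det (block_mx B w (- u) 0) + \det B.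
Proof.
have schur : block_mx B w (- u) 1%:M =
    block_mx 1%:M w 0 1%:M *m block_mx (B + w *m u) 0 (- u) 1%:M.
  by rewrite mulmx_block !mul1mx !mulmx0 !mul0mx !mulmx1 !add0r mulmxN addrK.
have -> : \det (B + w *m u) = \det (block_mx B w (- u) 1%:M).
  by rewrite schur det_mulmx det_ublock det_lblock !det1 !mul1r mulr1.
rewrite /block_mx.
have -> : row_mx (- u) 1%:M = row_mx (- u) 0 + row_mx 0 (1%:M : 'M_1).
  by rewrite add_row_mx addr0 add0r.
by rewrite det_col_mxD -/(block_mx B w 0 1%:M) det_ublock det1 mulr1.
Qed.

Lemma det_skew_border_even (B : 'M[R]_m) (w : 'cV_m) :
  (forall i j, B i j = - B j i) -> (forall i, B i i = 0) -> ~~ odd m ->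
  \det (block_mx B w (- w^T) 0) = 0.
Proof.
move=> B_skew B_diag even_m; apply: det_skew_odd; last by rewrite addn1 /= even_m.
  move=> i j; case: (split_ordP i) => a ->; case: (split_ordP j) => b ->;
    by rewrite ?block_mxEul ?block_mxEur ?block_mxEdl ?block_mxEdr
               ?mxE ?opprK ?oppr0 // B_skew.
by move=> i; case: (split_ordP i) => a ->; rewrite ?block_mxEul ?block_mxEdr ?mxE.
Qed.

End BorderedDeterminant.

Section SplitMap.

Variables (m1 m2 m1' m2' : nat) (f1 : 'I_m1' -> 'I_m1) (f2 : 'I_m2' -> 'I_m2).

Definition split_map (i : 'I_(m1' + m2')) : 'I_(m1 + m2) :=
  match split i with inl a => lshift m2 (f1 a) | inr b => rshift m1 (f2 b) end.

Lemma split_map_lshift a : split_map (lshift m2' a) = lshift m2 (f1 a).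
Proof. by rewrite /split_map (unsplitK (inl _ a)). Qed.

Lemma split_map_rshift b : split_map (rshift m1' b) = rshift m1 (f2 b).
Proof. by rewrite /split_map (unsplitK (inr _ b)). Qed.

Lemma split_map_inj : injective f1 -> injective f2 -> injective split_map.
Proof.
move=> f1_inj f2_inj i j.
case: (split_ordP i) => a ->; case: (split_ordP j) => b ->;
  rewrite ?split_map_lshift ?split_map_rshift => /eqP; rewrite eq_shift // => /eqP.
- by move=> /f1_inj ->.
- by move=> /f2_inj ->.
Qed.

Lemma codom_split_map (X1 : {set 'I_m1}) (X2 : {set 'I_m2}) :
  codom f1 =i X1 -> codom f2 =i X2 ->
  codom split_map =i lshift m2 @: X1 :|: @rshift m1 m2 @: X2.
Proof.
move=> f1X f2X i; apply/codomP/setUP => [[j ->]|].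
  case: (split_ordP j) => a ->; rewrite ?split_map_lshift ?split_map_rshift;
    by [left; rewrite imset_f // -f1X codom_f | right; rewrite imset_f // -f2X codom_f].
case=> /imsetP [k]; rewrite -?f1X -?f2X => /codomP [a ->] ->.
  by exists (lshift m2' a); rewrite split_map_lshift.
by exists (rshift m1' a); rewrite split_map_rshift.
Qed.

End SplitMap.

Lemma mxsub_block (R : Type) m1 m2 m1' m2' n1 n2 n1' n2'
    (f1 : 'I_m1' -> 'I_m1) (f2 : 'I_m2' -> 'I_m2)
    (g1 : 'I_n1' -> 'I_n1) (g2 : 'I_n2' -> 'I_n2)
    (Aul : 'M[R]_(m1, n1)) Aur Adl (Adr : 'M_(m2, n2)) :
  mxsub (split_map f1 f2) (split_map g1 g2) (block_mx Aul Aur Adl Adr) =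
  block_mx (mxsub f1 g1 Aul) (mxsub f1 g2 Aur) (mxsub f2 g1 Adl) (mxsub f2 g2 Adr).
Proof.
apply/matrixP => i j; rewrite mxE.
case: (split_ordP i) => a ->; case: (split_ordP j) => b ->;
  by rewrite !(split_map_lshift, split_map_rshift, block_mxEul, block_mxEur,
               block_mxEdl, block_mxEdr) !mxE.
Qed.

Lemma codom_comp (T1 T2 T3 : finType) (f : T1 -> T2) (h : T2 -> T3) (X : {set T2}) :
  codom f =i X -> codom (h \o f) =i h @: X.
Proof.
move=> fX y; apply/codomP/imsetP => [[x ->]|[z]].
  by exists (f x); rewrite // -fX codom_f.
by rewrite -fX => /codomP [x ->] ->; exists x.
Qed.

Lemma codom_enum_val (T : finType) (X : {set T}) : codom (@enum_val _ (mem X)) =i X.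
Proof.
move=> x; apply/codomP/idP => [[i ->]|xX]; first exact: enum_valP.
by exists (enum_rank_in xX x); rewrite enum_rankK_in.
Qed.

Lemma det_mxsub_codom (R : comPzRingType) N k (M : 'M[R]_N) (f g : 'I_k -> 'I_N) :
  injective f -> injective g -> codom f =i codom g ->
  \det (mxsub f f M) = \det (mxsub g g M).
Proof.
move=> f_inj g_inj fg.
have /fin_all_exists [h gE] i : exists j, g i = f j.
  by apply/codomP; rewrite fg codom_f.
have h_inj : injective h by move=> i j hij; apply: g_inj; rewrite !gE hij.
pose s := perm h_inj.
have -> : mxsub g g M = row_perm s (col_perm s (mxsub f f M)).
  by apply/matrixP => i j; rewrite !mxE !permE -!gE.
rewrite row_permE col_permE !det_mulmx !det_perm odd_permV.
by rewrite mulrCA -expr2 sqrr_sign mulr1.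
Qed.

Lemma det_principal_submxE (K : fieldType) N (M : 'M[K]_N) (X : {set 'I_N}) k
    (f : 'I_k -> 'I_N) :
  injective f -> codom f =i X -> \det (principal_submx M X) = \det (mxsub f f M).
Proof.
move=> f_inj fX.
have k_eq : k = #|X| by rewrite -[k]card_ord -(card_codom f_inj); apply: eq_card.
subst k; apply: det_mxsub_codom => // [|i]; first exact: enum_val_inj.
by rewrite codom_enum_val fX.
Qed.

Theorem lemma2p27 (K : fieldType) (n : nat) (A : 'M[K]_n) (v : 'cV[K]_n)
  (hA : skew_symmetric A) (I : {set 'I_n}) :
  \det (principal_submx (A + v *m v^T) I)
  = \det (principal_submx (bordered_mx A v) (alpha_set I)).
Proof.
case: hA => A_skew A_diag.
pose e := @enum_val _ (mem I); have e_inj : injective e := @enum_val_inj _ _.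
pose B := mxsub e e A; pose w := rowsub e v.
have B_skew i j : B i j = - B j i by rewrite !mxE.
have B_diag i : B i i = 0 by rewrite mxE.
have -> : principal_submx (A + v *m v^T) I = B + w *m w^T.
  by rewrite -[LHS]/(mxsub e e _) raddfD /= mxsub_mul trmx_mxsub.
rewrite det_add_mul_block /alpha_set; case: ifP => odd_I.
  pose g := split_map e (@id 'I_1).
  have gI : codom g =i lshift 1 @: I :|: [set rshift n ord0].
    rewrite -imset_set1; apply: codom_split_map (codom_enum_val I) _ => i.
    by rewrite (ord1 i) codom_f set11.
  rewrite (det_principal_submxE _ (split_map_inj e_inj (@inj_id _)) gI).
  rewrite mxsub_block raddfN /= -trmx_mxsub mxsub_id.
  by rewrite (det_skew_odd B_skew B_diag odd_I) addr0.
rewrite (det_principal_submxE _ (inj_comp (@lshift_inj _ _) e_inj)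
           (codom_comp _ (codom_enum_val I))).
rewrite mxsub_comp -ulsubmxEsub block_mxKul.
by rewrite det_skew_border_even ?odd_I ?add0r.
Qed.
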